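(* Let $R$ be a run of a distributed program $\Pi$ and let $X$ be an agent (module) of $\Pi$ that is immediate in $R$. Then (1) the set of moments $t\ge0$ at which $X$ is enabled is discrete (has no limit point in $[0,\infty)$); (2) if $X$ is enabled at a moment $t$, then $X$ is disabled at $t+$ (i.e. on some interval $(t,t+\epsilon)$) and, if $t>0$, at $t-$ (i.e. on some interval $(t-\epsilon,t)$).
   Context: A distributed program $\Pi$ is given by a vocabulary $\Upsilon$ (containing a universe symbol Reals, interpreted as the real numbers, and not containing the nullary symbol $\mathrm{CT}$) together with a finite set of modules; each module is a rule built from update rules, conditionals, blocks and parallel declarations, and is executed by its own agent. Executing a module at a state means computing the set of updates (location, new value) it generates and performing them simultaneously; an inconsistent update set does nothing. A module is enabled at a state if its update set is consistent and contains at least one update that changes the state, and disabled otherwise. Function symbols are static, internal (changed only by executing modules) or external (changed only by the environment). States are structures of vocabulary $\Upsilon\cup\{\mathrm{CT}\}$ with $\mathrm{CT}$ real. A pre-run is a map $t\mapsto R(t)$, $t\in[0,\infty)$, to states with a common superuniverse, $\mathrm{CT}=t$ in $R(t)$, and such that, writing $\rho(t)$ for the reduct of $R(t)$ to $\Upsilon$, for every $\tau>0$ there are $0=t_0<\dots<t_n=\tau$ with $\rho$ constant on each $(t_i,t_{i+1})$; $\rho(t+)$, $\rho(t-)$ denote the one-sided constant values. A pre-run is a run of $\Pi$ if (i) whenever $\rho(t+)\ne\rho(t)$, $\rho(t+)$ is the $\Upsilon$-reduct of the state obtained by executing some modules $M_1,\dots,M_k$ at $R(t)$ (these agents are said to fire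 at $t$), and external functions agree in $\rho(t)$ and $\rho(t+)$; (ii) whenever $t>0$ and $\rho(t)\neq\rho(t-)$, they differ only in external functions. An agent is immediate (in $R$) if it fires at every moment at which it is enabled. *)

From Stdlib Require Import Reals Lra List.
Import ListNotations.
Open Scope R_scope.

Set Implicit Arguments.


Inductive fkind := Static | Internal | External.

(** The nullary symbol CT is NOT a member of [Fsym]
    (it is handled separately: term [TCT], state field [ct]). *)
Record vocab := {
  Fsym : Type;
  arity : Fsym -> nat;
  kind : Fsym -> fkind;
  RealsSym : Fsym;
  Reals_arity : arity RealsSym = 1%nat;
  Reals_static : kind RealsSym = Static
}.
Arguments arity {_}.
Arguments kind {_}.
Arguments RealsSym {_}.

Record superuniverse := {
  carrier : Type;
  ttU : carrier;
  ffU : carrier;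
  undefU : carrier;
  inR : R -> carrier;
  inR_inj : forall r s, inR r = inR s -> r = s;
  tt_ff : ttU <> ffU;
  tt_undef : ttU <> undefU;
  ff_undef : ffU <> undefU;
  tt_notR : forall r, inR r <> ttU;
  ff_notR : forall r, inR r <> ffU;
  undef_notR : forall r, inR r <> undefU
}.

Section ASM.
Variable V : vocab.

Inductive term :=
  | TVar : nat -> term
  | TCT : term
  | TApp : Fsym V -> list term -> term.

Inductive rule :=
  | RUpdate : Fsym V -> list term -> term -> rule
  | RIf : term -> rule -> rule -> rule
  | RBlock : list rule -> rule
  | RPar : nat -> Fsym V -> rule -> rule.              (* var x ranges over U: R endvar *)

Fixpoint wf_term (t : term) : Prop :=
  match t with
  | TVar _ => True
  | TCT => True
  | TApp f ts => length ts = arity f /\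
      (fix go (l : list term) : Prop :=
         match l with nil => True | t :: l => wf_term t /\ go l end) ts
  end.

Fixpoint wf_rule (r : rule) : Prop :=
  match r with
  | RUpdate f ts t0 => kind f = Internal /\ length ts = arity f /\
      Forall wf_term ts /\ wf_term t0
  | RIf g r1 r2 => wf_term g /\ wf_rule r1 /\ wf_rule r2
  | RBlock rs =>
      (fix go (l : list rule) : Prop :=
         match l with nil => True | r :: l => wf_rule r /\ go l end) rs
  | RPar _ u r => arity u = 1%nat /\ wf_rule r
  end.

(** A distributed program: finitely many modules (agents 0 .. nmod-1). *)
Record program := {
  nmod : nat;
  module : nat -> rule;
  module_wf : forall i, (i < nmod)%nat -> wf_rule (module i)
}.

Variable B : superuniverse.
Notation U := (carrier B).

(** A state of vocabulary Upsilon ∪ {CT} over the superuniverse [U]: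
    an interpretation of every symbol of Upsilon (only argument lists of the
    right length matter) together with the (real) value of CT. *)
Record state := { interp : Fsym V -> list U -> U; ct : R }.

Definition is_state (S : state) : Prop :=
  (forall r, interp S RealsSym [inR B r] = ttU B) /\
  (forall x, (forall r, x <> inR B r) -> interp S RealsSym [x] = ffU B).

(** Equality of Upsilon-reducts (rho(S1) = rho(S2)). *)
Definition req (S1 S2 : state) : Prop :=
  forall f args, length args = arity f -> interp S1 f args = interp S2 f args.

Definition ext_agree (S1 S2 : state) : Prop :=
  forall f args, length args = arity f -> kind f = External ->
    interp S1 f args = interp S2 f args.

Definition differ_only_ext (S1 S2 : state) : Prop :=
  forall f args, length args = arity f -> kind f <> External ->
    interp S1 f args = interp S2 f args.

Definition env := nat -> U.
Definition env0 : env := fun _ => undefU B.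
Definition extend (e : env) (x : nat) (a : U) : env :=
  fun y => if Nat.eqb y x then a else e y.

Fixpoint eval (S : state) (e : env) (t : term) : U :=
  match t with
  | TVar x => e x
  | TCT => inR B (ct S)
  | TApp f ts => interp S f (map (eval S e) ts)
  end.

(** An update: (location (f, args), new value). *)
Definition update := (Fsym V * list U * U)%type.

Fixpoint updates (r : rule) (S : state) (e : env) (u : update) : Prop :=
  match r with
  | RUpdate f ts t0 => u = (f, map (eval S e) ts, eval S e t0)
  | RIf g r1 r2 =>
      (eval S e g = ttU B /\ updates r1 S e u) \/
      (eval S e g <> ttU B /\ updates r2 S e u)
  | RBlock rs =>
      (fix go (l : list rule) : Prop :=
         match l with nil => False | r :: l => updates r S e u \/ go l end) rs
  | RPar x un r =>
      exists a, interp S un [a] = ttU B /\ updates r S (extend e x a) u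
  end.

Definition consistent (D : update -> Prop) : Prop :=
  forall f args v w, D (f, args, v) -> D (f, args, w) -> v = w.

(** S' is (a state whose reduct is) the result of performing the update set
    D at S; an inconsistent update set does nothing. *)
Definition perform (D : update -> Prop) (S S' : state) : Prop :=
  ct S' = ct S /\
  (consistent D ->
     forall f args, length args = arity f ->
       (exists v, D (f, args, v) /\ interp S' f args = v) \/
       ((forall v, ~ D (f, args, v)) /\ interp S' f args = interp S f args)) /\
  (~ consistent D -> req S' S).

Definition module_updates (P : program) (i : nat) (S : state) : update -> Prop :=
  updates (module P i) S env0.

Definition executes (P : program) (Ms : list nat) (S S' : state) : Prop :=
  perform (fun u => exists i, In i Ms /\ module_updates P i S u) S S'.

Definition enabled (P : program) (X : nat) (S : state) : Prop :=
  consistent (module_updates P X S) /\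
  exists f args v, module_updates P X S (f, args, v) /\ v <> interp S f args.

Definition rho_plus_is (Rn : R -> state) (t : R) (S : state) : Prop :=
  exists eps, 0 < eps /\ forall s, t < s < t + eps -> req (Rn s) S.

Definition rho_minus_is (Rn : R -> state) (t : R) (S : state) : Prop :=
  exists eps, 0 < eps /\ forall s, t - eps < s < t -> req (Rn s) S.

(** The map t |-> Rn t is only relevant for t in [0, oo). *)
Definition pre_run (Rn : R -> state) : Prop :=
  (forall t, 0 <= t -> is_state (Rn t) /\ ct (Rn t) = t) /\
  (forall tau, 0 < tau ->
     exists (n : nat) (tp : nat -> R),
       tp 0%nat = 0 /\ tp n = tau /\
       (forall i, (i < n)%nat -> tp i < tp (S i)) /\
       (forall i, (i < n)%nat -> forall s s',
          tp i < s < tp (S i) -> tp i < s' < tp (S i) ->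
          req (Rn s) (Rn s'))).

Definition agents_of (P : program) (Ms : list nat) : Prop :=
  forall i, In i Ms -> (i < nmod P)%nat.

Definition is_run (P : program) (Rn : R -> state) : Prop :=
  pre_run Rn /\
  (forall t Splus, 0 <= t -> rho_plus_is Rn t Splus -> ~ req Splus (Rn t) ->
     exists Ms S', agents_of P Ms /\ executes P Ms (Rn t) S' /\
       req Splus S' /\ ext_agree (Rn t) Splus) /\
  (forall t Sminus, 0 < t -> rho_minus_is Rn t Sminus -> ~ req Sminus (Rn t) ->
     differ_only_ext Sminus (Rn t)).

Definition fires (P : program) (Rn : R -> state) (X : nat) (t : R) : Prop :=
  exists Splus, rho_plus_is Rn t Splus /\ ~ req Splus (Rn t) /\
    exists Ms S', In X Ms /\ agents_of P Ms /\
      executes P Ms (Rn t) S' /\ req Splus S'.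

Definition immediate (P : program) (Rn : R -> state) (X : nat) : Prop :=
  forall t, 0 <= t -> enabled P X (Rn t) -> fires P Rn X t.

End ASM.

(** An immediate agent fires whenever it is enabled, and firing at [s] makes
    [rho(s+)] differ from [rho(s)].  Inside an open interval of the partition
    that comes with the pre-run, [rho] is constant, so nothing fires there and
    the agent is disabled.  Every [t >= 0] has such an interval immediately to
    its right and, when [t > 0], immediately to its left; together they cover a
    punctured neighbourhood of [t]. *)

From Stdlib Require Import Reals Lra Lia List.
Open Scope R_scope.

Section PreRuns.
Context {V : vocab} {B : superuniverse}.

Lemma req_sym (S1 S2 : state V B) : req S1 S2 -> req S2 S1.
Proof. intros H f args L; symmetry; apply H; exact L. Qed.

Lemma req_trans (S1 S2 S3 : state V B) : req S1 S2 -> req S2 S3 -> req S1 S3.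
Proof. intros H1 H2 f args L; rewrite H1; auto. Qed.

Definition constant_on (Rn : R -> state V B) (a b : R) : Prop :=
  forall s s', a < s < b -> a < s' < b -> req (Rn s) (Rn s').

Lemma constant_on_sub (Rn : R -> state V B) a b a' b' :
  a <= a' -> b' <= b -> constant_on Rn a b -> constant_on Rn a' b'.
Proof. intros Ha Hb Hc s s' Hs Hs'; apply Hc; lra. Qed.

Lemma partition_locate (tp : nat -> R) (n : nat) (t : R) :
  tp 0%nat <= t < tp n -> exists i, (i < n)%nat /\ tp i <= t < tp (S i).
Proof.
  induction n as [|n IH]; intros Ht; [lra|].
  destruct (Rlt_or_le t (tp n)) as [Hlt|Hle].
  - destruct (IH ltac:(lra)) as [i [Hi Hti]]; exists i; split; [lia | exact Hti].
  - exists n; split; [lia | lra].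
Qed.

Lemma pre_run_constant_right {Rn : R -> state V B} {t : R} :
  0 <= t -> pre_run Rn -> exists eps, 0 < eps /\ constant_on Rn t (t + eps).
Proof.
  intros Ht [_ Hpart].
  destruct (Hpart (t + 1) ltac:(lra)) as [n [tp [H0 [Hn [_ Hconst]]]]].
  destruct (partition_locate tp n t ltac:(lra)) as [i [Hi Hti]].
  exists (tp (S i) - t); split; [lra|].
  apply constant_on_sub with (tp i) (tp (S i)); [lra | lra |].
  exact (Hconst i Hi).
Qed.

Lemma pre_run_constant_left {Rn : R -> state V B} {t : R} :
  0 < t -> pre_run Rn -> exists eps, 0 < eps /\ constant_on Rn (t - eps) t.
Proof.
  intros Ht [_ Hpart].
  destruct (Hpart t Ht) as [n [tp [H0 [Hn [Hinc Hconst]]]]].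
  destruct n as [|m]; [lra|].
  exists (t - tp m); split.
  - rewrite <- Hn; specialize (Hinc m ltac:(lia)); lra.
  - replace (t - (t - tp m)) with (tp m) by ring.
    rewrite <- Hn; exact (Hconst m ltac:(lia)).
Qed.

Lemma not_fires_constant_on (P : program V) {Rn : R -> state V B} (X : nat) {a b s : R} :
  constant_on Rn a b -> a < s < b -> ~ fires P Rn X s.
Proof.
  intros Hconst Hs [Splus [[eps [Heps Hplus]] [Hchange _]]].
  apply Hchange.
  set (s' := Rmin (s + eps / 2) ((s + b) / 2)).
  assert (Hs' : s < s' < s + eps /\ a < s' < b).
  { unfold s', Rmin; destruct (Rle_dec _ _); lra. }
  apply req_trans with (Rn s').
  - apply req_sym, Hplus; tauto.
  - apply Hconst; [tauto | lra].
Qed.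

Lemma immediate_disabled_on {P : program V} {Rn : R -> state V B} {X : nat} {a b : R} :
  immediate P Rn X -> 0 <= a -> constant_on Rn a b ->
  forall s, a < s < b -> ~ enabled P X (Rn s).
Proof.
  intros Himm Ha Hconst s Hs Hen.
  apply (not_fires_constant_on P X Hconst Hs), Himm; [lra | exact Hen].
Qed.

Lemma immediate_disabled_right (P : program V) (Rn : R -> state V B) (X : nat) (t : R) :
  pre_run Rn -> immediate P Rn X -> 0 <= t ->
  exists eps, 0 < eps /\ forall s, t < s < t + eps -> ~ enabled P X (Rn s).
Proof.
  intros Hpre Himm Ht; destruct (pre_run_constant_right Ht Hpre) as [eps [Heps Hc]].
  exists eps; split; [exact Heps | exact (immediate_disabled_on Himm Ht Hc)].
Qed.

Lemma immediate_disabled_left (P : program V) (Rn : R -> state V B) (X : nat) (t : R) :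
  pre_run Rn -> immediate P Rn X -> 0 < t ->
  exists eps, 0 < eps /\ forall s, t - eps < s < t -> ~ enabled P X (Rn s).
Proof.
  intros Hpre Himm Ht; destruct (pre_run_constant_left Ht Hpre) as [eps [Heps Hc]].
  exists (Rmin eps t); split; [apply Rmin_pos; lra |].
  pose proof (Rmin_l eps t); pose proof (Rmin_r eps t).
  apply (immediate_disabled_on Himm (a := t - Rmin eps t) (b := t)); [lra |].
  apply constant_on_sub with (t - eps) t; [lra | lra | exact Hc].
Qed.

End PreRuns.

Theorem mainTheorem2 (V : vocab) (B : superuniverse) (P : program V)
  (Rn : R -> state V B) (X : nat) :
  (X < nmod P)%nat ->
  is_run P Rn ->
  immediate P Rn X ->
  (* (1) the set of moments t >= 0 at which X is enabled has no limit point in [0, oo) *)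
  (forall t, 0 <= t -> exists eps, 0 < eps /\
     forall s, 0 <= s -> Rabs (s - t) < eps -> s <> t -> ~ enabled P X (Rn s)) /\
  (* (2) if X is enabled at t then X is disabled at t+ and, if t > 0, at t- *)
  (forall t, 0 <= t -> enabled P X (Rn t) ->
     (exists eps, 0 < eps /\ forall s, t < s < t + eps -> ~ enabled P X (Rn s)) /\
     (0 < t -> exists eps, 0 < eps /\ forall s, t - eps < s < t -> ~ enabled P X (Rn s))).
Proof.
  intros _ [Hpre _] Himm.
  pose proof (fun t => immediate_disabled_right P Rn X t Hpre Himm) as Hright.
  pose proof (fun t => immediate_disabled_left P Rn X t Hpre Himm) as Hleft.
  split; [| intros t Ht _; split; auto].
  intros t Ht.
  destruct (Hright t Ht) as [er [Her Hr]].
  destruct (Rle_lt_or_eq_dec 0 t Ht) as [Htpos | <-].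
  - destruct (Hleft t Htpos) as [el [Hel Hl]].
    exists (Rmin er el); split; [apply Rmin_pos; lra |].
    intros s _ Habs Hst; pose proof (Rmin_l er el); pose proof (Rmin_r er el).
    apply Rabs_def2 in Habs.
    destruct (Rlt_or_le s t); [apply Hl | apply Hr]; lra.
  - exists er; split; [exact Her |].
    intros s Hs Habs Hst; apply Rabs_def2 in Habs; apply Hr; lra.
Qed.
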